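(* Let $\theta_1,\theta_2>0$, $\theta=\theta_1+\theta_2$, $p=\theta_1/\theta$, and let $\{\xi(t)\}_{t\ge0}$ be the Fleming–Viot process on $[0,1]$ with generator \[ \mathcal{L}g(x)=x\big(g(1)-g(x)\big)+(1-x)\big(g(0)-g(x)\big)+\tfrac12(\theta_1-\theta x)g'(x). \] Writing $\mathbb{E}_x$ for expectation given $\xi(0)=x$, for $n=0,1,\ldots$ \begin{align*} \mathbb{E}_x\big[(\xi(t)-p)^n\big]&=e^{-t(1+n\theta/2)}(x-p)^n\\ &\quad+\frac{2/\theta}{n+2/\theta}\Big[p(1-p)^n+(-1)^n(1-p)p^n\Big]\Big[1-e^{-t(1+n\theta/2)}\Big]\\ &\quad+\frac{(x-p)e^{-\theta t/2}(2/\theta)}{n-1+2/\theta}\Big[(1-p)^n-(-1)^np^n\Big]\Big[1-e^{-t(1+(n-1)\theta/2)}\Big]. \end{align*}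
   Context: $\{\xi(t)\}$ is the two-type star-shaped $\Lambda$-Fleming–Viot process with mutation: at rate 1 the whole population is replaced by the offspring of a single randomly chosen individual, and mutation occurs along lines at rate $\theta/2$ with new type 1 with probability $p$; $\xi(t)$ is the frequency of type 1. *)

From HB Require Import structures.
From mathcomp Require Import all_boot all_order all_algebra.
From mathcomp Require Import all_classical all_reals all_analysis.
Set Implicit Arguments. Unset Strict Implicit. Unset Printing Implicit Defensive.
Import Order.TTheory GRing.Theory Num.Theory.
Import numFieldNormedType.Exports.
Local Open Scope classical_set_scope.
Local Open Scope ring_scope.

Definition FV_gen {R : realType} (th1 th : R) (g : R -> R) (x : R) : R :=
  x * (g 1 - g x) + (1 - x) * (g 0 - g x) + (th1 - th * x) / 2 * derive1 g x.

Definition C1fun {R : realType} (g : R -> R) : Prop :=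
  (forall y : R, derivable g y 1) /\ continuous (derive1 g).

(* [xi] is (a version of) the Fleming--Viot process with generator
   [FV_gen th1 th], started at [x], on the probability space [(T, P)]:
   a jointly measurable process with values in [0,1], xi(0) = x, satisfying
   Dynkin's formula  E_x[g(xi t)] = g(x) + \int_0^t E_x[(L g)(xi s)] ds
   for every C^1 test function g (the expectation of the martingale
   problem for L). *)
Definition FV_process {R : realType} (th1 th : R) (x : R)
  {d : measure_display} {T : measurableType d} (P : probability T R)
  (xi : R -> T -> R) : Prop :=
  [/\ measurable_fun setT (fun q : R * T => xi q.1 q.2),
      (forall t w, 0 <= t -> 0 <= xi t w <= 1),
      (forall w, xi 0 w = x) &
      (forall g : R -> R, C1fun g -> forall t : R, 0 <= t ->
         Rintegral P setT (fun w => g (xi t w)) =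
         g x + Rintegral lebesgue_measure `[0, t]
                 (fun s => Rintegral P setT (fun w => FV_gen th1 th g (xi s w))))].

From HB Require Import structures.
From mathcomp Require Import all_boot all_order all_algebra.
From mathcomp Require Import all_classical all_reals all_analysis.
From mathcomp Require Import ring lra measurable_realfun.
Import Order.TTheory GRing.Theory Num.Theory.
Import numFieldNormedType.Exports.
Local Open Scope classical_set_scope.
Local Open Scope ring_scope.

(* Dynkin's formula for g z = (z - p)^n, on which the generator acts as
   L g y = A_n + B_n (y - p) - c_n (y - p)^n with c_n = 1 + n th / 2, shows that
   the centred moments m_n t = E_x[(xi t - p)^n] solve the linear integral equations
   m_n t = (x - p)^n + \int_0^t (A_n + B_n m_1 s - c_n m_n s) ds.
   As A_1 = 0 and B_1 = 1, first m_1 t = (x - p) e^{-th t/2}; then every m_n solves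
   a linear equation with exponential forcing, whose solution is explicit.
   Solutions are unique: a continuous solution of such an equation is
   differentiable, so the difference w of two of them solves w' = - c w, w 0 = 0,
   hence (e^{c s} w s)' = 0 and w = 0 by the mean value theorem. *)

Section LinearIntegralEquation.
Context {R : realType}.
Notation mu := (@lebesgue_measure R).

Lemma derivable_continuous (f : R -> R) :
  (forall y : R, derivable f y 1) -> continuous f.
Proof. by move=> df y; apply/differentiable_continuous/derivable1_diffP. Qed.

Lemma is_derive_expRM (a x : R) :
  is_derive x 1 (fun s => expR (a * s)) (a * expR (a * x)).
Proof.
have dl : derivable ( *%R a) x 1 by apply/derivable1_diffP.
have de : derivable (@expR R) (a * x) 1 by exact: ex_derive.
have dc : derivable (expR \o *%R a) x 1.
  by apply/derivable1_diffP; apply: differentiable_comp; exact/derivable1_diffP.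
apply: DeriveDef; first exact: dc.
rewrite -derive1E (derive1_comp dl de) !derive1E.
rewrite (@derive_val _ _ _ _ _ _ _ (is_derive_expR _)) mulrC; congr (_ * _).
have := @derive_val _ _ _ _ _ _ _ (@is_deriveZ R R R id a x 1 1 (is_derive_id _ _)).
by move=> h; rewrite -[RHS]mulr1; exact: h.
Qed.

Lemma continuous_expRM (a : R) : continuous (fun s => expR (a * s)).
Proof. by apply: derivable_continuous => y; case: (is_derive_expRM a y). Qed.

Lemma linear_ode_homogeneous (c t : R) (w : R -> R) : 0 <= t ->
  {within `[0, t], continuous w} ->
  (forall s, s \in `]0, t[ -> is_derive s 1 w (- (c * w s))) ->
  w t = expR (- (c * t)) * w 0.
Proof.
move=> t0 cw dw.
pose W s := expR (c * s) * w s.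
have dW s : s \in `]0, t[ -> is_derive s 1 W 0.
  move=> /dw dws; apply: is_derive_eq (is_deriveM (is_derive_expRM c s) dws) _.
  by rewrite -![_ *: _]/(_ * _); ring.
have cW : {within `[0, t], continuous W}.
  move=> z; apply: (@continuousM _ (subspace `[0, t]) (fun s => expR (c * s)) w).
    exact: (continuous_subspaceT (continuous_expRM c)).
  exact: cw.
have [_ _] := MVT_segment t0 dW cW.
rewrite mul0r => /eqP; rewrite subr_eq0 /W mulr0 expR0 mul1r => /eqP <-.
by rewrite mulrA -expRD addNr expR0 mul1r.
Qed.

Section IntegralEquation.
Variables (u0 c : R) (k u : R -> R).
Hypothesis k_cont : continuous k.
Hypothesis u_int : forall t, 0 <= t -> mu.-integrable `[0, t] (EFin \o u).
Hypothesis u_eq : forall t, 0 <= t ->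
  u t = u0 + \int[mu]_(s in `[0, t]) (k s - c * u s).

Let F y := \int[mu]_(s in `[0, y]) (k s - c * u s).

Let integrable_integrand t : 0 <= t ->
  mu.-integrable `[0, t] (EFin \o (fun s => k s - c * u s)).
Proof.
move=> t0.
have -> : EFin \o (fun s => k s - c * u s) = (fun s => (k s)%:E - (c%:E * (u s)%:E))%E.
  by apply/funext => s; rewrite /= EFinB EFinM.
apply: integrableB => //; last by apply: integrableZl => //; exact: u_int.
apply: continuous_compact_integrable; first exact: segment_compact.
exact: continuous_subspaceT.
Qed.

Lemma Rintegral_equation_continuous (t : R) : 0 <= t -> {within `[0, t], continuous u}.
Proof.
move=> t0; apply: (@subspace_eq_continuous _ _ _ (fun y => u0 + F y)).
  by move=> y; rewrite inE /= in_itv /= => /andP[y0 _]; symmetry; exact: u_eq.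
have Fc := parameterized_integral_continuous t0 (integrable_integrand _ t0).
move=> y; apply: (@continuousD _ _ (subspace `[0, t]) (cst u0) F).
  exact: cvg_cst.
exact: Fc.
Qed.

Lemma Rintegral_equation_derive (x : R) : 0 < x -> is_derive x 1 u (k x - c * u x).
Proof.
move=> x0; have x1 : x < x + 1 by rewrite ltrDl.
have ux : {for x, continuous u}.
  apply: (within_continuous_continuous (lt_trans x0 x1)).
    exact/Rintegral_equation_continuous/ltW/(lt_trans x0 x1).
  by rewrite in_itv /= x0 x1.
have fx : {for x, continuous (fun s => k s - c * u s)}.
  apply: (@continuousB _ _ _ k (fun s => c * u s)); first exact: k_cont.
  by apply: (@continuousM _ _ (cst c) u) => //; exact: cvg_cst.
have [dF F'x] := continuous_FTC1_closed x1
  (integrable_integrand _ (ltW (lt_trans x0 x1))) x0 fx.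
have uF : \forall y \near x, u0 + F y = u y.
  by near=> y; rewrite u_eq //; apply: ltW; near: y; exact: lt_nbhsr.
apply: near_eq_is_derive uF _.
have := is_deriveD (is_derive_cst u0 x 1) (derivableP dF).
by rewrite -derive1E F'x add0r.
Unshelve. all: by end_near.
Qed.

Lemma Rintegral_equation_uniq (v : R -> R) :
  (forall s : R, is_derive s 1 v (k s - c * v s)) -> v 0 = u0 ->
  forall t, 0 <= t -> u t = v t.
Proof.
move=> dv v0 t t0; apply/eqP; rewrite -subr_eq0; apply/eqP.
have cv : continuous v by apply: derivable_continuous => y; case: (dv y).
have u0E : u 0 = u0 by rewrite u_eq // set_itv1 Rintegral_set1 addr0.
have := @linear_ode_homogeneous c t (u - v) t0.
rewrite -[(u - v) 0]/(u 0 - v 0) -[(u - v) t]/(u t - v t) u0E v0 subrr mulr0; apply.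
- move=> z; apply: (@continuousB _ _ (subspace `[0, t]) u v).
    exact: Rintegral_equation_continuous.
  exact: (continuous_subspaceT cv).
move=> s; rewrite in_itv /= => /andP[s0 _].
apply: is_derive_eq (is_deriveB (Rintegral_equation_derive _ s0) (dv s)) _.
by rewrite -[(u - v) s]/(u s - v s); ring.
Qed.

End IntegralEquation.

Lemma Rintegral_equation_expR (u0 c l a b : R) (u : R -> R) :
  (forall t, 0 <= t -> mu.-integrable `[0, t] (EFin \o u)) ->
  (forall t, 0 <= t -> u t = u0 + \int[mu]_(s in `[0, t])
     (c * a + (c - l) * b * expR (- l * s) - c * u s)) ->
  forall t, 0 <= t -> u t = a + (u0 - a - b) * expR (- c * t) + b * expR (- l * t).
Proof.
move=> u_int u_eq; apply: (@Rintegral_equation_uniq u0 c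
  (fun s => c * a + (c - l) * b * expR (- l * s)) u _ u_int u_eq).
- move=> y; apply: (@continuousD _ _ _ (cst (c * a))
    (fun s => (c - l) * b * expR (- l * s))); first exact: cvg_cst.
  apply: (@continuousM _ _ (cst ((c - l) * b)) (fun s => expR (- l * s))).
    exact: cvg_cst.
  exact: continuous_expRM.
- move=> s.
  have := is_deriveD (is_deriveD (is_derive_cst a s 1)
    (is_deriveZ (u0 - a - b) (is_derive_expRM (- c) s)))
    (is_deriveZ b (is_derive_expRM (- l) s)).
  move/is_derive_eq; apply; rewrite -![_ *: _]/(_ * _); ring.
- by rewrite !mulr0 expR0 !mulr1; ring.
Qed.

End LinearIntegralEquation.

Lemma C1fun_continuous {R : realType} (g : R -> R) : C1fun g -> continuous g.
Proof. by move=> [dg _]; exact: derivable_continuous. Qed.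

Lemma continuous_bounded01 {R : realType} (psi : R -> R) : continuous psi ->
  exists K, forall y, 0 <= y <= 1 -> `|psi y| <= K.
Proof.
move=> cpsi.
have : compact [set psi y | y in `[0, 1]].
  apply: continuous_compact; last exact: segment_compact.
  exact: continuous_subspaceT.
move=> /compact_bounded [K [_ HK]]; exists (K + 1) => y y01.
apply: (HK (K + 1)); first by rewrite ltrDl.
by exists y => //; rewrite /= in_itv.
Qed.

Section CentredPowers.
Context {R : realType}.
Variable p : R.

Lemma is_derive_subrX (y : R) n :
  is_derive y 1 (fun z => (z - p) ^+ n) (n%:R * (y - p) ^+ n.-1).
Proof.
have h := is_deriveX n (is_deriveB (is_derive_id y 1) (is_derive_cst p y 1)).
have -> : (fun z => (z - p) ^+ n) = (id - cst p) ^+ n.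
  by apply/funext => z; rewrite exprfctE.
by apply: is_derive_eq h _; rewrite subr0 -[_ *: _]/(_ * _) mulr1.
Qed.

Lemma derive1_subrX (y : R) n :
  (fun z => (z - p) ^+ n)^`()%classic y = n%:R * (y - p) ^+ n.-1.
Proof. by rewrite derive1E (@derive_val _ _ _ _ _ _ _ (is_derive_subrX y n)). Qed.

Lemma continuous_subrX n : continuous (fun z => (z - p) ^+ n).
Proof. by apply: derivable_continuous => y; case: (is_derive_subrX y n). Qed.

Lemma C1fun_subrX n : C1fun (fun z => (z - p) ^+ n).
Proof.
split=> [y|]; first by case: (is_derive_subrX y n).
have -> : (fun z => (z - p) ^+ n)^`()%classic = fun y => n%:R * (y - p) ^+ n.-1.
  by apply/funext => y; rewrite derive1_subrX.
move=> y; apply: (@continuousM _ _ (cst n%:R) (fun y => (y - p) ^+ n.-1)).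
  exact: cvg_cst.
exact: continuous_subrX.
Qed.

Lemma FV_gen_subrX (th1 th y : R) n : th1 = p * th ->
  FV_gen th1 th (fun z => (z - p) ^+ n) y =
    p * (1 - p) ^+ n + (1 - p) * (- p) ^+ n
  + ((1 - p) ^+ n - (- p) ^+ n) * (y - p) - (1 + n%:R * th / 2) * (y - p) ^+ n.
Proof.
move=> ->; rewrite /FV_gen derive1_subrX sub0r.
by case: n => [|m]; rewrite ?expr0 /= ?exprS; ring.
Qed.

End CentredPowers.

Section Clamp.
Context {R : realType}.

Definition clamp01 (y : R) : R := Num.max 0 (Num.min y 1).

Lemma clamp01_id y : 0 <= y <= 1 -> clamp01 y = y.
Proof. by case/andP=> y0 y1; rewrite /clamp01 (min_l y1) (max_r y0). Qed.

Lemma clamp01_itv y : 0 <= clamp01 y <= 1.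
Proof. by rewrite /clamp01 le_max lexx /= ge_max ler01 /= ge_min lexx orbT. Qed.

Lemma measurable_clamp01 : measurable_fun setT clamp01.
Proof.
have -> : clamp01 = (cst 0 \max (id \min cst 1)) by [].
by apply: measurable_maxr => //; apply: measurable_minr.
Qed.

End Clamp.

Section Expectation.
Context {R : realType} {d : measure_display} {T : measurableType d}.
Variables (P : probability T R) (xi : R -> T -> R).
Hypothesis xi_meas : measurable_fun setT (fun q : R * T => xi q.1 q.2).
Notation mu := (@lebesgue_measure R).

(* The process is clamped into [0, 1] so that [Exi psi] is bounded and
   jointly measurable on the whole time axis, not only for [s >= 0]. *)
Definition Exi (psi : R -> R) (s : R) : R := \int[P]_w psi (clamp01 (xi s w)).

Lemma Rintegral_prob_cst (a : R) : \int[P]_w a = a.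
Proof.
rewrite Rintegral_cst // [X in a * X](_ : _ = 1) ?mulr1 //.
exact: (congr1 fine (probability_setT P)).
Qed.

Lemma measurable_xi_at s : measurable_fun setT (xi s).
Proof.
have -> : xi s = (fun q : R * T => xi q.1 q.2) \o pair s by [].
exact: measurableT_comp xi_meas (pair1_measurable s).
Qed.

Lemma integrable_clamp (psi : R -> R) s : continuous psi ->
  P.-integrable setT (EFin \o (fun w => psi (clamp01 (xi s w)))).
Proof.
move=> cpsi; have [K bK] := continuous_bounded01 psi cpsi.
have PT : (P setT < +oo)%E by rewrite probability_setT ltry.
apply: measurable_bounded_integrable => //.
- apply: measurableT_comp; first exact: continuous_measurable_fun.
  exact: measurableT_comp measurable_clamp01 (measurable_xi_at s).
- exists K; split; first by rewrite num_real.
  by move=> M KM w _; apply: le_trans (bK _ (clamp01_itv _)) (ltW KM).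
Qed.

Lemma normr_Exi_le (psi : R -> R) K s :
  continuous psi -> (forall y, 0 <= y <= 1 -> `|psi y| <= K) -> `|Exi psi s| <= K.
Proof.
move=> cpsi bK; have iP := integrable_clamp psi s cpsi.
apply: le_trans (le_normr_Rintegral _ iP) _ => //.
rewrite -[leRHS](Rintegral_prob_cst K).
apply: le_Rintegral => //; first exact: integrable_norm.
- exact: (@finite_measure_integrable_cst _ _ _ P setT K).
- by move=> w _; apply: bK; exact: clamp01_itv.
Qed.

(* Joint measurability comes from Fubini-Tonelli applied to the nonnegative
   shift [psi (clamp01 (xi s w)) + K]. *)
Lemma measurable_Exi (psi : R -> R) : continuous psi -> measurable_fun setT (Exi psi).
Proof.
move=> cpsi; have [K bK] := continuous_bounded01 psi cpsi.
pose H := fun q : R * T => psi (clamp01 (xi q.1 q.2)) + K.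
have mH : measurable_fun setT H.
  apply: measurable_funD => //; apply: measurableT_comp.
    exact: continuous_measurable_fun.
  exact: measurableT_comp measurable_clamp01 xi_meas.
have H0 q : (0 <= (EFin \o H) q)%E.
  rewrite lee_fin /H -lerBlDr sub0r.
  by have := bK _ (clamp01_itv (xi q.1 q.2)); rewrite ler_norml => /andP[].
have mF := @measurable_fun_fubini_tonelli_F _ _ R T R P
  (EFin \o H) (proj2 (measurable_EFinP _ _) mH) H0.
have -> : Exi psi = (fun s => fine (fubini_F P (EFin \o H) s) - K).
  apply/funext => s; rewrite /fubini_F /= -[fine _]/(\int[P]_y H (s, y)).
  rewrite /H RintegralD ?Rintegral_prob_cst ?addrK //.
    exact: integrable_clamp.
  exact: (@finite_measure_integrable_cst _ _ _ P setT K).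
by apply: measurable_funB => //; apply: measurableT_comp => //; exact: fine_measurable.
Qed.

Lemma integrable_Exi (psi : R -> R) t : continuous psi ->
  mu.-integrable `[0, t] (EFin \o Exi psi).
Proof.
move=> cpsi; have [K bK] := continuous_bounded01 psi cpsi.
have mu_fin : (mu `[0%R, t] < +oo)%E.
  by rewrite lebesgue_measure_itv /= lte_fin; case: ifP => _; rewrite ltry.
apply: measurable_bounded_integrable => //.
- exact: measurable_funS measurableT (@subsetT _ _) (measurable_Exi psi cpsi).
- exists K; split; first by rewrite num_real.
  by move=> M KM s _; apply: le_trans (normr_Exi_le psi K s cpsi bK) (ltW KM).
Qed.

Lemma Exi_affine (f g : R -> R) (a b e s : R) : continuous f -> continuous g ->
  Exi (fun z => a + b * f z + e * g z) s = a + b * Exi f s + e * Exi g s.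
Proof.
move=> cf cg.
have cZ (h : R -> R) (k : R) : continuous h -> continuous (fun z => k * h z).
  by move=> ch z; apply: (@continuousM _ _ (cst k) h); [exact: cvg_cst|exact: ch].
have cabf : continuous (fun z => a + b * f z).
  move=> z; apply: (@continuousD _ _ _ (cst a) (fun z => b * f z)).
    exact: cvg_cst.
  exact: cZ.
rewrite /Exi RintegralD //; last 2 first.
- exact: (integrable_clamp _ s cabf).
- exact: (integrable_clamp _ s (cZ _ e cg)).
rewrite RintegralD //; last 2 first.
- exact: (@finite_measure_integrable_cst _ _ _ P setT a).
- exact: (integrable_clamp _ s (cZ _ b cf)).
by rewrite Rintegral_prob_cst !RintegralZl //; exact: integrable_clamp.
Qed.

End Expectation.

Section FlemingViotMoments.
Context {R : realType} {d : measure_display} {T : measurableType d}.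
Variables (P : probability T R) (xi : R -> T -> R) (th1 th x p : R).
Hypothesis xi_meas : measurable_fun setT (fun q : R * T => xi q.1 q.2).
Hypothesis xi01 : forall t w, 0 <= t -> 0 <= xi t w <= 1.
Hypothesis dynkin : forall g : R -> R, C1fun g -> forall t : R, 0 <= t ->
  \int[P]_w g (xi t w) =
  g x + \int[lebesgue_measure]_(s in `[0, t]) (\int[P]_w FV_gen th1 th g (xi s w)).
Hypothesis th1E : th1 = p * th.
Hypothesis th_gt0 : 0 < th.
Notation Exi := (Exi P xi).

Lemma Rintegral_xi (psi : R -> R) s : 0 <= s -> \int[P]_w psi (xi s w) = Exi psi s.
Proof. by move=> s0; apply: eq_Rintegral => w _; rewrite clamp01_id // xi01. Qed.

Lemma Exi_expR (g : R -> R) (c l a b : R) : C1fun g ->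
  (forall s, 0 <= s -> \int[P]_w FV_gen th1 th g (xi s w) =
     c * a + (c - l) * b * expR (- l * s) - c * Exi g s) ->
  forall t, 0 <= t -> Exi g t = a + (g x - a - b) * expR (- c * t) + b * expR (- l * t).
Proof.
move=> g_C1 gen_g; have g_cont := C1fun_continuous _ g_C1.
apply: Rintegral_equation_expR => [t _|t t0]; first exact: integrable_Exi.
rewrite -Rintegral_xi // dynkin //; congr (_ + _).
by apply: eq_Rintegral => s; rewrite inE /= in_itv /= => /andP[s0 _]; exact: gen_g.
Qed.

Lemma Exi_FV_gen_subrX n s : 0 <= s ->
  \int[P]_w FV_gen th1 th (fun z => (z - p) ^+ n) (xi s w) =
    p * (1 - p) ^+ n + (1 - p) * (- p) ^+ n
  + ((1 - p) ^+ n - (- p) ^+ n) * Exi (fun z => (z - p) ^+ 1) s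
  - (1 + n%:R * th / 2) * Exi (fun z => (z - p) ^+ n) s.
Proof.
move=> s0; rewrite (Rintegral_xi (FV_gen th1 th (fun z => (z - p) ^+ n))) //.
have -> : FV_gen th1 th (fun z => (z - p) ^+ n) = fun z =>
    p * (1 - p) ^+ n + (1 - p) * (- p) ^+ n + ((1 - p) ^+ n - (- p) ^+ n) * (z - p) ^+ 1
    + (- (1 + n%:R * th / 2)) * (z - p) ^+ n.
  by apply/funext => z; rewrite FV_gen_subrX // expr1; ring.
by rewrite Exi_affine ?mulNr //; exact: continuous_subrX.
Qed.

Lemma Exi_first_moment t : 0 <= t ->
  Exi (fun z => (z - p) ^+ 1) t = (x - p) * expR (- (th / 2) * t).
Proof.
move=> t0; rewrite (@Exi_expR _ (th / 2) 0 0 0 (C1fun_subrX p 1)) //.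
  by rewrite expr1 !subr0 add0r mul0r addr0.
by move=> s s0; rewrite Exi_FV_gen_subrX //; ring.
Qed.

Section HigherMoments.
Variable n : nat.
Let c := 1 + n%:R * th / 2.
Let c' := 1 + (n%:R - 1) * th / 2.
Let A := p * (1 - p) ^+ n + (1 - p) * (- p) ^+ n.
Let B := (1 - p) ^+ n - (- p) ^+ n.

Let cA : c * (A / c) = A.
Proof.
rewrite mulrC divfK // gt_eqF // /c.
have : 0 <= n%:R * th / 2 by rewrite divr_ge0 // mulr_ge0 // ltW.
lra.
Qed.

(* [c'] vanishes only if [n = 0], and then [B = 0]. *)
Let c'B : c' * (B * (x - p) / c') = B * (x - p).
Proof.
have [n0|n_gt0] := posnP n; first by rewrite /B n0 !expr0 subrr !mul0r mulr0.
rewrite mulrC divfK // gt_eqF // /c'.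
have : 0 <= (n%:R - 1) * th / 2.
  by rewrite divr_ge0 // mulr_ge0 ?subr_ge0 ?ler1n // ltW.
lra.
Qed.

Lemma Exi_moment t : 0 <= t ->
  Exi (fun z => (z - p) ^+ n) t =
    A / c + ((x - p) ^+ n - A / c - B * (x - p) / c') * expR (- c * t)
  + B * (x - p) / c' * expR (- (th / 2) * t).
Proof.
apply: Exi_expR; first exact: C1fun_subrX.
move=> s s0; rewrite Exi_FV_gen_subrX // Exi_first_moment //.
have -> : c - th / 2 = c' by rewrite /c /c'; ring.
by rewrite c'B cA /A /B /c; ring.
Qed.

End HigherMoments.

End FlemingViotMoments.

Theorem corollary1 (R : realType) (th1 th2 : R) (x : R)
  (d : measure_display) (T : measurableType d) (P : probability T R)
  (xi : R -> T -> R) :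
  0 < th1 -> 0 < th2 -> 0 <= x <= 1 ->
  let th := th1 + th2 in
  let p := th1 / th in
  FV_process th1 th x P xi ->
  forall (n : nat) (t : R), 0 <= t ->
  Rintegral P setT (fun w => (xi t w - p) ^+ n) =
    expR (- (t * (1 + n%:R * th / 2))) * (x - p) ^+ n
  + (2 / th) / (n%:R + 2 / th)
      * (p * (1 - p) ^+ n + (-1) ^+ n * (1 - p) * p ^+ n)
      * (1 - expR (- (t * (1 + n%:R * th / 2))))
  + (x - p) * expR (- (th * t / 2)) * (2 / th) / (n%:R - 1 + 2 / th)
      * ((1 - p) ^+ n - (-1) ^+ n * p ^+ n)
      * (1 - expR (- (t * (1 + (n%:R - 1) * th / 2)))).
Proof.
move=> th1_gt0 th2_gt0 _ th p [xi_meas xi01 _ dynkin] n t t0.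
have th_gt0 : 0 < th by rewrite addr_gt0.
have th1E : th1 = p * th by rewrite /p divfK ?gt_eqF.
rewrite (Rintegral_xi P xi xi01 (fun z => (z - p) ^+ n)) //.
rewrite (Exi_moment P xi th1 th x p xi_meas xi01 dynkin th1E th_gt0 n t t0).
have rate_inv m : 2 / th / (m + 2 / th) = (1 + m * th / 2)^-1.
  have th_neq0 : th != 0 by rewrite gt_eqF.
  rewrite (_ : m + 2 / th = 2 / th * (1 + m * th / 2)); last by field.
  by rewrite invfM mulrA divff ?mul1r // mulf_neq0 // invr_eq0.
rewrite rate_inv -[(x - p) * _ * (2 / th) / _]mulrA rate_inv.
set c := 1 + n%:R * th / 2; set c' := 1 + (n%:R - 1) * th / 2.
have exp_half : expR (- (th / 2) * t) = expR (- (th * t / 2)) by congr expR; ring.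
have exp_c : expR (- (t * c)) = expR (- (th * t / 2)) * expR (- (t * c')).
  by rewrite -expRD /c /c'; congr expR; ring.
have exp_c' : expR (- c * t) = expR (- (t * c)) by rewrite mulNr mulrC.
by rewrite exp_c' exp_half exp_c (exprNn p); ring.
Qed.
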